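(* Let $d\ge 2$ and $k$ be positive integers. There exists a unique subset $\mathcal{X}$ of $\mathbb{P}^d_\circ$ such that $|\mathcal{X}|=\delta_z(d,k)$ and $\kappa(\mathcal{X})\le k$ if and only if $k=\kappa(B(d,p)\cap\mathbb{P}^d_\circ)$ for some positive integer $p$.
   Context: A point of $\mathbb{Z}^d$ is primitive if its coordinates are relatively prime; $\mathbb{P}^d_\circ$ denotes the set of primitive points of $\mathbb{Z}^d$ whose first non-zero coordinate is positive. $B(d,p)=\{x\in\mathbb{R}^d:\|x\|_1\le p\}$. For a finite $\mathcal{X}\subset\mathbb{R}^d$, $\kappa(\mathcal{X})=\max_{1\le i\le d}\sum_{x\in\mathcal{X}}|x_i|$, and $\delta_z(d,k)=\max\{|\mathcal{X}|:\mathcal{X}\subset\mathbb{P}^d_\circ,\ \kappa(\mathcal{X})\le k\}$. *)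

From HB Require Import structures.
From mathcomp Require Import all_boot all_order all_algebra.
From mathcomp Require Import finmap.
Set Implicit Arguments. Unset Strict Implicit. Unset Printing Implicit Defensive.
Import Order.TTheory GRing.Theory Num.Theory.
Local Open Scope fset_scope.
Local Open Scope ring_scope.

Definition pt (d : nat) := {ffun 'I_d -> int}.

Definition primitive (d : nat) (x : pt d) : bool :=
  (\big[gcdn/0%N]_(i < d) `|x i|%N == 1)%N.

Definition first_nz_pos (d : nat) (x : pt d) : bool :=
  [exists i : 'I_d, (0 < x i) && [forall j : 'I_d, (j < i)%N ==> (x j == 0)]].

Definition inPcirc (d : nat) (x : pt d) : bool := primitive x && first_nz_pos x.

Definition l1 (d : nat) (x : pt d) : int := \sum_(i < d) `|x i|.

Definition kappa (d : nat) (X : {fset pt d}) : int :=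
  \big[Num.max/0]_(i < d) \sum_(x <- X) `|x i|.

Definition box (d m : nat) : {fset pt d} :=
  seq_fset tt [seq [ffun i => (nat_of_ord (f i))%:Z - m%:Z] | f : {ffun 'I_d -> 'I_(m.*2).+1} <- enum {ffun 'I_d -> 'I_(m.*2).+1}].

(* B(d,p) \cap P^d_circ (every such point lies in the box [-p,p]^d) *)
Definition BP (d p : nat) : {fset pt d} :=
  [fset x in box d p | inPcirc x && (l1 x <= p%:Z)].

Definition admissible (d k : nat) (X : {fset pt d}) : Prop :=
  (forall x, x \in X -> inPcirc x) /\ kappa X <= k%:Z.

Definition admissibleb (d k : nat) (X : {fset pt d}) : bool :=
  all (@inPcirc d) X && (kappa X <= k%:Z).

(* Every admissible X
   satisfies |x_i| <= kappa(X) <= k for x in X, hence X is a subset of the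
   box [-k,k]^d, so the maximum may be taken over subsets of that box. *)
Definition delta_z (d k : nat) : nat :=
  (\max_(S <- fpowerset (box d k) | admissibleb k S) #|` S|)%N.

From HB Require Import structures.
From mathcomp Require Import all_boot all_order all_algebra perm zify.
From mathcomp Require Import finmap.
Set Implicit Arguments. Unset Strict Implicit. Unset Printing Implicit Defensive.
Import Order.TTheory GRing.Theory Num.Theory.
Local Open Scope fset_scope.
Local Open Scope ring_scope.

(* If k = kappa(B) for B = B(d,p) /\ P°, then B is invariant under signed permutations
   of the coordinates, so all its column sums equal k and its total l1-weight k*d is the
   largest an admissible set can have.  Since points outside B are heavier than points
   of B, B is the only subset of P° with at least |B| points and weight at most that of B.

   Conversely, a unique maximal admissible set X is invariant under signed permutations.
   For z in X and y outside X, pick d distinct images of each whose absolute values fill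
   every column with total l1(z), resp. l1(y) (cyclic shifts of the sorted vector, or sign
   changes when all |z_i| agree); exchanging them keeps X admissible unless l1(z) < l1(y).
   Hence X = B(d,q) /\ P°, and kappa(X) = k, as otherwise (1,q-1,0,...,0) could be
   exchanged for (1,q,0,...,0). *)

Section FsetSums.
Variables (T : choiceType) (R : nmodType) (F : T -> R).

Lemma big_fsetU_disjoint (A B : {fset T}) : [disjoint A & B] ->
  \sum_(x <- A `|` B) F x = \sum_(x <- A) F x + \sum_(x <- B) F x.
Proof.
move=> /fdisjointP AB; rewrite (big_fsetID _ (mem A)) /=; congr (_ + _).
  by apply: eq_fbigl => x; rewrite !inE /=; case: (x \in A); rewrite ?andbF.
apply: eq_fbigl => x; rewrite !inE /=.
by case xA: (x \in A) => /=; [apply/esym/negbTE/AB | rewrite andbT].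
Qed.

Lemma big_fsetDS (A B : {fset T}) : B `<=` A ->
  \sum_(x <- A) F x = \sum_(x <- A `\` B) F x + \sum_(x <- B) F x.
Proof.
move=> /fsubsetP BA; rewrite (big_fsetID _ (mem B)) /= addrC; congr (_ + _).
  by apply: eq_fbigl => x; rewrite !inE /= andbC.
by apply: eq_fbigl => x; rewrite !inE /=; apply/andP/idP => [[]//|xB]; split => //; apply: BA.
Qed.

Lemma sumr_const_fset (A : {fset T}) (c : R) : \sum_(x <- A) c = c *+ #|` A|.
Proof. by rewrite big_const_seq count_predT iter_addr_0. Qed.

End FsetSums.

Section Points.
Variable d : nat.
Implicit Types (x y : pt d) (X U V : {fset pt d}).

Lemma in_boxP m x : reflect (forall i, `|x i| <= m%:Z) (x \in box d m).
Proof.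
rewrite /box seq_fsetE; apply: (iffP mapP) => [[f _ ->] i | xm].
  by rewrite ffunE; have := ltn_ord (f i); move: (val (f i)); rewrite -addnn; lia.
have lt_m2 i : (absz (x i + m%:Z)%R < m.*2.+1)%N by rewrite -addnn; have := xm i; lia.
exists [ffun i => Ordinal (lt_m2 i)]; first by rewrite mem_enum.
by apply/ffunP => i; rewrite !ffunE /=; have := xm i; lia.
Qed.

Definition colsum X (i : 'I_d) : int := \sum_(x <- X) `|x i|.

Lemma colsum_le_kappa X i : colsum X i <= kappa X.
Proof. exact: le_bigmax. Qed.

Lemma abs_le_colsum X x i : x \in X -> `|x i| <= colsum X i.
Proof.
move=> xX; rewrite /colsum (big_fsetD1 _ xX) lerDl.
by apply: sumr_ge0 => y _; apply: normr_ge0.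
Qed.

Lemma admissibleP k X : reflect (admissible k X) (admissibleb k X).
Proof. by apply: (iffP andP) => -[Xin Xk]; split => //; apply/allP. Qed.

Lemma admissible_box k X : admissible k X -> X `<=` box d k.
Proof.
move=> [_ Xk]; apply/fsubsetP => x xX; apply/in_boxP => i.
by rewrite (le_trans (abs_le_colsum i xX)) // (le_trans (colsum_le_kappa X i)).
Qed.

Lemma card_le_delta_z k X : admissible k X -> (#|` X| <= delta_z d k)%N.
Proof.
move=> Xadm; rewrite /delta_z; apply: leq_bigmax_seq; last exact/admissibleP.
by rewrite fpowersetE; apply: admissible_box.
Qed.

Lemma delta_z_attained k : exists X, admissible k X /\ #|` X| = delta_z d k.
Proof.
have fset0_adm : admissible k (fset0 : {fset pt d}).
  split=> [x|]; first by rewrite inE.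
  by apply: bigmax_le => // i _; rewrite /colsum big_seq_fset0.
have fset0_pow : fset0 \in fpowerset (box d k) by rewrite fpowersetE fsub0set.
rewrite /delta_z big_seq_fsetE /= (bigop.bigmax_eq_arg [` fset0_pow]); last exact/admissibleP.
case: arg_maxnP => [|S S_adm _]; first exact/admissibleP.
by exists (val S); split => //; apply/admissibleP.
Qed.

Lemma abs_le_l1 x i : `|x i| <= l1 x.
Proof. by rewrite /l1 (bigD1 i) //= lerDl; apply: sumr_ge0 => j _; apply: normr_ge0. Qed.

Lemma sum_l1_colsum X : \sum_(x <- X) l1 x = \sum_(i < d) colsum X i.
Proof. exact: exchange_big. Qed.

Lemma sum_l1_le k X : admissible k X -> \sum_(x <- X) l1 x <= k%:Z *+ d.
Proof.
move=> [_ Xk]; rewrite sum_l1_colsum -[X in _ *+ X]card_ord -sumr_const.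
by apply: ler_sum => i _; apply: le_trans (colsum_le_kappa X i) Xk.
Qed.

Lemma in_BP q x : (x \in BP d q) = inPcirc x && (l1 x <= q%:Z).
Proof.
rewrite !inE /=; apply/andP/idP => [[] //| /[dup] /andP[_ xq] ->]; split => //.
by apply/in_boxP => i; apply: le_trans (abs_le_l1 x i) xq.
Qed.

Lemma primitive_neq0 x : primitive x -> exists i, x i != 0.
Proof.
move=> xprim; apply/existsP; apply: contraLR xprim; rewrite negb_exists => /forallP x0.
by rewrite /primitive big1 // => i _; move: (x0 i); rewrite negbK => /eqP ->.
Qed.

Lemma l1_gt0 x : primitive x -> 0 < l1 x.
Proof.
by case/primitive_neq0 => i xi; apply: lt_le_trans (abs_le_l1 x i); rewrite normr_gt0.
Qed.

Definition spermute (s : 'I_d -> bool) (p : {perm 'I_d}) x : pt d :=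
  [ffun i => if s i then - x (p i) else x (p i)].

Definition orient x : pt d := if first_nz_pos x then x else - x.

Definition spact s p x := orient (spermute s p x).

Lemma spermuteN s p x : spermute s p (- x) = - spermute s p x.
Proof. by apply/ffunP => i; rewrite !ffunE; case: (s i). Qed.

Lemma spermute_inj s p : injective (spermute s p).
Proof.
move=> x y /ffunP xy; apply/ffunP => i; move: (xy (p^-1 i)%g).
by rewrite !ffunE permKV; case: (s _) => // /oppr_inj.
Qed.

Lemma first_nz_posN x : first_nz_pos x -> ~~ first_nz_pos (- x).
Proof.
case/existsP => i /andP[xi /forallP before_i]; apply/existsP => -[j /andP[]].
rewrite ffunE oppr_gt0 => xj /forallP before_j.
case: (ltngtP i j) => [ij | ji | /val_inj ij].
- by move: (before_j i); rewrite ij ffunE oppr_eq0 => /eqP xi0; rewrite xi0 ltxx in xi.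
- by move: (before_i j); rewrite ji => /eqP xj0; rewrite xj0 ltxx in xj.
- by move: (lt_trans xj xi); rewrite ij ltxx.
Qed.

Lemma first_nz_pos_orient x : (exists i, x i != 0) -> first_nz_pos (orient x).
Proof.
case=> i0 xi0; rewrite /orient; case: ifP => // not_pos.
case: (@arg_minnP _ i0 (fun i => x i != 0) val xi0) => i xi first_i.
have before_i (j : 'I_d) : (j < i)%N -> x j == 0.
  by apply: contraTT => xj; rewrite -leqNgt; apply: first_i.
have [xi_neg | xi_pos | xi_eq0] := ltrgtP (x i) 0; last by rewrite xi_eq0 eqxx in xi.
  apply/existsP; exists i; rewrite ffunE oppr_gt0 xi_neg.
  by apply/forallP => j; rewrite ffunE oppr_eq0; apply/implyP/before_i.
case/negP: (negbT not_pos); apply/existsP; exists i; rewrite xi_pos.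
by apply/forallP => j; apply/implyP/before_i.
Qed.

Lemma abs_spact s p x i : `|spact s p x i| = `|x (p i)|.
Proof.
by rewrite /spact /orient; case: ifP => _; rewrite ?ffunE; case: (s i); rewrite ?normrN.
Qed.

Lemma l1_spact s p x : l1 (spact s p x) = l1 x.
Proof.
rewrite /l1 [RHS](reindex_inj (@perm_inj _ p)) /=.
by apply: eq_bigr => i _; rewrite abs_spact.
Qed.

Lemma primitive_abs_perm (p : {perm 'I_d}) x y :
  (forall i, `|y i| = `|x (p i)|) -> primitive y = primitive x.
Proof.
move=> yx; rewrite /primitive [in RHS](reindex_inj (@perm_inj _ p)) /=.
by congr (_ == _)%N; apply: eq_bigr => i _; move: (yx i); rewrite -!abszE => -[].
Qed.

Lemma inPcirc_spact s p x : inPcirc x -> inPcirc (spact s p x).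
Proof.
case/andP => xprim _; rewrite /inPcirc (primitive_abs_perm (abs_spact s p x)) xprim.
apply: first_nz_pos_orient; have [i xi] := primitive_neq0 xprim.
by exists (p^-1 i)%g; rewrite ffunE permKV; case: (s _); rewrite ?oppr_eq0.
Qed.

Lemma spact_inj s p : {in @inPcirc d &, injective (spact s p)}.
Proof.
move=> x y /andP[_ x_pos] /andP[_ y_pos]; rewrite /spact /orient.
case: ifP => _; case: ifP => _; rewrite -?spermuteN => /spermute_inj //; last exact: oppr_inj.
- by move=> xy; move: (first_nz_posN y_pos); rewrite -xy x_pos.
- by move=> xy; move: (first_nz_posN x_pos); rewrite xy y_pos.
Qed.

Lemma spact_abs_perm (p : {perm 'I_d}) x y :
  (forall i, `|y i| = `|x (p i)|) -> first_nz_pos y ->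
  spact (fun i => x (p i) != y i) p x = y.
Proof.
move=> yx y_pos; rewrite /spact; have -> : spermute (fun i => x (p i) != y i) p x = y.
  by apply/ffunP => i; rewrite ffunE; have := yx i; case: eqP => /=; lia.
by rewrite /orient y_pos.
Qed.

Definition spact_set s p X := [fset spact s p x | x in X].

Section SpactSet.
Variables (s : 'I_d -> bool) (p : {perm 'I_d}) (X : {fset pt d}).
Hypothesis XP : forall x, x \in X -> inPcirc x.

Let spact_injX : {in X &, injective (spact s p)}.
Proof. by move=> x y /XP xP /XP yP; apply: spact_inj. Qed.

Lemma card_spact_set : #|` spact_set s p X| = #|` X|.
Proof. by apply: card_in_imfset; apply: spact_injX. Qed.

Lemma colsum_spact_set i : colsum (spact_set s p X) i = colsum X (p i).
Proof.
rewrite /colsum big_imfset /=; last exact: spact_injX.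
by apply: eq_bigr => x _; rewrite abs_spact.
Qed.

Lemma kappa_spact_set : kappa (spact_set s p X) = kappa X.
Proof.
rewrite /kappa [RHS](reindex_inj (@perm_inj _ p)) /=.
by apply: eq_bigr => i _; apply: colsum_spact_set.
Qed.

End SpactSet.

Lemma admissible_spact_set k s p X : admissible k X -> admissible k (spact_set s p X).
Proof.
move=> [XP Xk]; split; last by rewrite kappa_spact_set.
by move=> _ /imfsetP[x /= xX ->]; apply/inPcirc_spact/XP.
Qed.

Lemma BP_inPcirc q x : x \in BP d q -> inPcirc x.
Proof. by rewrite in_BP => /andP[]. Qed.

Lemma spact_set_BP s p q : spact_set s p (BP d q) = BP d q.
Proof.
apply/eqP; rewrite eqEfcard card_spact_set; last exact: BP_inPcirc.
rewrite leqnn andbT; apply/fsubsetP => _ /imfsetP[x /= + ->].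
by rewrite !in_BP l1_spact => /andP[/(inPcirc_spact s p) -> ->].
Qed.

Lemma colsum_BP q i j : colsum (BP d q) i = colsum (BP d q) j.
Proof.
rewrite -{1}(spact_set_BP (fun=> false) (tperm i j)) colsum_spact_set ?tpermL //.
exact: BP_inPcirc.
Qed.

Lemma sum_l1_BP q (i0 : 'I_d) : \sum_(x <- BP d q) l1 x = kappa (BP d q) *+ d.
Proof.
have kappa_BP : kappa (BP d q) = colsum (BP d q) i0.
  apply/le_anti; rewrite colsum_le_kappa andbT.
  apply: bigmax_le => [|i _]; first by apply: sumr_ge0 => x _; apply: normr_ge0.
  by have := colsum_BP q i i0; rewrite /colsum => ->.
rewrite sum_l1_colsum kappa_BP -[X in _ *+ X]card_ord -sumr_const.
by apply: eq_bigr => i _; apply: colsum_BP.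
Qed.

Lemma admissible_swap k X U V :
  admissible k X -> U `<=` X -> (forall v, v \in V -> inPcirc v) -> [disjoint X & V] ->
  (forall i, colsum X i - colsum U i + colsum V i <= k%:Z) ->
  admissible k (X `\` U `|` V).
Proof.
move=> [XP _] UX VP XV swap_k; split.
  by move=> x; rewrite !inE => /orP[/andP[_ /XP] | /VP].
apply: bigmax_le => // i _; have := swap_k i; congr (_ <= _).
rewrite [X in X - _](big_fsetDS _ UX) addrK big_fsetU_disjoint //.
by apply: fdisjointWl XV; apply: fsubsetDl.
Qed.

Lemma card_swap X U V : U `<=` X -> [disjoint X & V] -> #|` U| = #|` V| ->
  #|` X `\` U `|` V| = #|` X|.
Proof.
move=> UX XV UV; rewrite cardfsU (disjoint_fsetI0 (fdisjointWl (fsubsetDl X U) XV)).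
by rewrite cardfs0 subn0 cardfsDS // -UV subnK // fsubset_leq_card.
Qed.

Lemma BP_min_weight q X : (forall x, x \in X -> inPcirc x) ->
  (#|` BP d q| <= #|` X|)%N -> \sum_(x <- X) l1 x <= \sum_(x <- BP d q) l1 x ->
  X = BP d q.
Proof.
set B := BP d q => XP BX XB.
have sumX := big_fsetDS (@l1 d) (fsubsetIl X B).
have sumB := big_fsetDS (@l1 d) (fsubsetIr X B).
rewrite fsetDIr fsetDv fset0U in sumX; rewrite fsetDIr fsetDv fsetU0 in sumB.
have heavy : (q.+1)%:Z *+ #|` X `\` B| <= \sum_(x <- X `\` B) l1 x.
  rewrite -sumr_const_fset !big_seq; apply: ler_sum => x.
  rewrite in_fsetD in_BP => /andP[xNB /XP xP]; move: xNB.
  by rewrite xP /= -ltNge -addn1 PoszD lezD1.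
have light : \sum_(x <- B `\` X) l1 x <= q%:Z *+ #|` B `\` X|.
  rewrite -sumr_const_fset !big_seq; apply: ler_sum => x.
  by rewrite in_fsetD in_BP => /andP[_ /andP[_ ->]].
have /(le_trans heavy)/le_trans/(_ light) : \sum_(x <- X `\` B) l1 x <= \sum_(x <- B `\` X) l1 x.
  by rewrite -(lerD2r (\sum_(x <- X `&` B) l1 x)) -sumX -sumB.
rewrite !pmulrn !mulrzz -!PoszM lez_nat => card_ineq.
have := cardfsID B X; have := cardfsID X B; rewrite fsetIC => cardX cardB.
have /eqP : #|` X `\` B| = 0%N by nia.
rewrite cardfs_eq0 fsetD_eq0 => XB_sub.
by apply/eqP; rewrite eqEfcard XB_sub.
Qed.

Lemma max_admissible_eq_BP k q X : (0 < d)%N -> k%:Z = kappa (BP d q) ->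
  admissible k X -> #|` X| = delta_z d k -> X = BP d q.
Proof.
move=> d_gt0 kq Xadm Xmax; apply: BP_min_weight; first by case: Xadm.
  by rewrite Xmax card_le_delta_z //; split; [exact: BP_inPcirc | rewrite kq].
by rewrite (sum_l1_BP q (Ordinal d_gt0)) -kq sum_l1_le.
Qed.

End Points.

Lemma sorting_perm (disp : Order.disp_t) (T : orderType disp) d (g : 'I_d -> T) :
  exists s : {perm 'I_d}, forall i j : 'I_d, (i <= j)%N -> (g (s j) <= g (s i))%O.
Proof.
pose ge := fun a b : T => (b <= a)%O; pose t := [tuple g i | i < d].
have /tuple_permP[s sortE] : perm_eq (sort ge t) t by rewrite perm_sort.
exists s => i j ij.
have sorted_t : sorted ge (sort ge t) by apply: sort_sorted => a b; apply: le_total.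
have ge_trans : transitive ge by move=> a b c ba cb; apply: le_trans cb ba.
have := sorted_leq_nth ge_trans (@lexx _ _) (g i) sorted_t; rewrite sortE.
move/(_ i j); rewrite !inE !size_tuple => /(_ (ltn_ord i) (ltn_ord j) ij).
by rewrite -!tnth_nth !tnth_mktuple.
Qed.

Lemma nonincreasing_periodic_const (disp : Order.disp_t) (T : porderType disp) n
    (b : 'I_n.+1 -> T) (t : 'I_n.+1) :
  (forall i j : 'I_n.+1, (i <= j)%N -> (b j <= b i)%O) -> t != 0 ->
  (forall l, b (l + t) = b l) -> forall l, b l = b 0.
Proof.
move=> b_noninc t_neq0 b_per; have t_gt0 : (0 < t)%N by rewrite lt0n.
suff b_const m : (m < n.+1)%N -> b (inord m) = b 0.
  by move=> l; rewrite -(b_const l (ltn_ord l)) inord_val.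
elim/ltn_ind: m => m IH m_lt; have [m_le_t | t_lt_m] := leqP m t.
  apply/le_anti; rewrite b_noninc ?inordK //=.
  by rewrite -(b_per 0) add0r b_noninc ?inordK.
have -> : inord m = inord (m - t) + t :> 'I_n.+1.
  by apply: val_inj; rewrite /= !inordK ?subnK ?modn_small //; lia.
by rewrite b_per IH //; lia.
Qed.

Section OrbitFrames.
Variable n : nat.
Implicit Types x : pt n.+1.

Definition orbit_frame x (f : 'I_n.+1 -> pt n.+1) :=
  [/\ injective f, forall j, exists s p, f j = spact s p x
    & forall i, \sum_(j < n.+1) `|f j i| = l1 x].

Lemma cyclic_frame x : (exists i, `|x i| != `|x 0|) -> exists f, orbit_frame x f.
Proof.
case=> i0 x_nonconst; have [sg sg_noninc] := sorting_perm (fun i => `|x i|).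
pose b i := `|x (sg i)|; pose f j := spact (fun=> false) (perm (@addIr _ j) * sg)%g x.
have abs_f j i : `|f j i| = b (i + j) by rewrite abs_spact permM permE.
exists f; split.
- move=> j j' fjj'; apply/eqP; rewrite -subr_eq0.
  apply: contraTT x_nonconst => t_neq0; rewrite negbK.
  have b_per l : b (l + (j - j')) = b l.
    by rewrite addrCA addrC -abs_f fjj' abs_f subrK.
  have b_const := nonincreasing_periodic_const sg_noninc t_neq0 b_per.
  by move: (b_const (sg^-1 i0)%g) (b_const (sg^-1 0)%g); rewrite /b !permKV => -> ->.
- by move=> j; exists (fun=> false), (perm (@addIr _ j) * sg)%g.
- move=> i; rewrite /l1 [RHS](reindex_inj (@perm_inj _ sg)) [RHS](reindex_inj (addrI i)).
  by apply: eq_bigr => j _; rewrite abs_f.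
Qed.

Lemma sign_frame x : (forall i, `|x i| = 1) -> exists f, orbit_frame x f.
Proof.
move=> x_unit; pose f j : pt n.+1 := [ffun i => if (i == j) && (j != 0) then -1 else 1].
pose id_perm : {perm 'I_n.+1} := 1%g.
have abs_f j i : `|f j i| = `|x (id_perm i)| by rewrite perm1 x_unit ffunE; case: ifP.
exists f; split.
- move=> j j' /ffunP fjj'; apply/eqP; apply: contraT => jj'.
  have [j0 | j_neq0] := eqVneq j 0.
    have j'_neq0 : j' != 0 by rewrite -j0 eq_sym.
    by move: (fjj' j'); rewrite !ffunE eqxx j'_neq0 j0 eqxx andbF.
  by move: (fjj' j); rewrite !ffunE eqxx j_neq0 (negbTE jj').
- move=> j; exists (fun i => x (id_perm i) != f j i), id_perm; rewrite spact_abs_perm //.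
  apply/existsP; exists 0; rewrite ffunE eq_sym andbN.
  by apply/forallP => i; rewrite ltn0.
- by move=> i; apply: eq_bigr => j _; rewrite abs_f perm1 !x_unit.
Qed.

Lemma primitive_abs_const x :
  primitive x -> (forall i, `|x i| = `|x 0|) -> forall i, `|x i| = 1.
Proof.
move=> x_prim x_const i; rewrite x_const -abszE.
have : (absz (x 0%R) %| 1)%N.
  rewrite -(eqP x_prim); apply/dvdn_biggcdP => j _.
  by move: (x_const j); rewrite -!abszE => -[->].
by rewrite dvdn1 => /eqP ->.
Qed.

Lemma orbit_frame_exists x : primitive x -> exists f, orbit_frame x f.
Proof.
move=> x_prim; have [/existsP[i xi] | x_const] := boolP [exists i, `|x i| != `|x 0|].
  by apply: cyclic_frame; exists i.
apply/sign_frame/primitive_abs_const => // i.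
by apply/eqP; move: x_const; rewrite negb_exists => /forallP/(_ i); rewrite negbK.
Qed.

End OrbitFrames.

Section UniqueMaximum.
Variables (n k : nat) (X : {fset pt n.+1}).
Hypothesis X_adm : admissible k X.
Hypothesis X_unique : forall Y, admissible k Y -> #|` Y| = #|` X| -> Y = X.

Let XP : forall x, x \in X -> inPcirc x. Proof. by case: X_adm. Qed.

Lemma swap_trivial (U V : {fset pt n.+1}) :
  U `<=` X -> (forall v, v \in V -> inPcirc v) -> [disjoint X & V] -> #|` U| = #|` V| ->
  (forall i, colsum X i - colsum U i + colsum V i <= k%:Z) -> V = fset0.
Proof.
move=> UX VP XV UV swap_k.
have XUV := X_unique (admissible_swap X_adm UX VP XV swap_k) (card_swap UX XV UV).
apply/eqP; rewrite -fsubset0; apply/fsubsetP => v vV.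
have vX : v \in X by rewrite -XUV inE vV orbT.
by move/fdisjointP: XV => /(_ v vX); rewrite vV.
Qed.

Lemma mem_spact s p x : inPcirc x -> (spact s p x \in X) = (x \in X).
Proof.
move=> xP; rewrite -{1}(X_unique (admissible_spact_set s p X_adm) (card_spact_set s p XP)).
apply/imfsetP/idP => [[y /= yX /(spact_inj xP (XP yX)) ->] // | xX].
by exists x.
Qed.

Lemma l1_lt_outside y z : inPcirc y -> y \notin X -> z \in X -> l1 z < l1 y.
Proof.
move=> yP yNX zX; rewrite ltNge; apply/negP => yz.
have /andP[z_prim _] := XP zX; have /andP[y_prim _] := yP.
have [fz [fz_inj fz_orb fz_sum]] := orbit_frame_exists z_prim.
have [fy [fy_inj fy_orb fy_sum]] := orbit_frame_exists y_prim.
have fy0 : fy 0 \in [fset fy j | j : 'I_n.+1] by apply/imfsetP; exists 0.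
suff V0 : [fset fy j | j : 'I_n.+1] = fset0 by rewrite V0 inE in fy0.
apply: (swap_trivial (U := [fset fz j | j : 'I_n.+1])).
- apply/fsubsetP => _ /imfsetP[j _ ->]; have [s [p ->]] := fz_orb j.
  by rewrite mem_spact // XP.
- by move=> _ /imfsetP[j _ ->]; have [s [p ->]] := fy_orb j; apply: inPcirc_spact.
- apply/fdisjointP_sym => _ /imfsetP[j _ ->]; have [s [p ->]] := fy_orb j.
  by rewrite mem_spact.
- by rewrite !card_imfset.
move=> i; rewrite /colsum (big_imfset _ _ _ (in2W fz_inj)) (big_imfset _ _ _ (in2W fy_inj)) /=.
rewrite !enumT -/(colsum X i) fz_sum fy_sum; case: X_adm => _ Xk.
by rewrite -addrA (le_trans _ (le_trans (colsum_le_kappa X i) Xk)) // gerDl addrC subr_le0.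
Qed.

Lemma unique_max_eq_BP : X = BP n.+1 (\max_(x <- X) absz (l1 x)).
Proof.
set q := \max_(x <- X) _; apply/fsetP => x; rewrite in_BP.
apply/idP/idP => [xX | /andP[xP xq]].
  rewrite XP //=; have := leq_bigmax_seq (F := fun x : pt n.+1 => absz (l1 x)) _ xX isT.
  by rewrite -/q; lia.
apply: contraT => xNX; have /andP[x_prim _] := xP.
have : (q <= (absz (l1 x)).-1)%N.
  apply/bigmax_leqP_seq => z zX _; have /andP[z_prim _] := XP zX.
  by have := l1_lt_outside xP xNX zX; have := l1_gt0 z_prim; lia.
by have := l1_gt0 x_prim; lia.
Qed.

End UniqueMaximum.

Section TwoDimensions.
Variable n : nat.

Definition pt1a (a : int) : pt n.+2 := [ffun i => if i == 0 then 1 else if i == 1 then a else 0].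

Lemma inPcirc_pt1a a : inPcirc (pt1a a).
Proof.
apply/andP; split; first by rewrite /primitive (bigD1 0) //= ffunE eqxx gcd1n.
by apply/existsP; exists 0; rewrite ffunE eqxx; apply/forallP => j; rewrite ltn0.
Qed.

Lemma l1_pt1a a : l1 (pt1a a) = 1 + `|a|.
Proof. by rewrite /l1 2!big_ord_recl big1 ?addr0 => [|i _]; rewrite !ffunE. Qed.

Lemma colsum_fset1 (a : pt n.+2) i : colsum [fset a] i = `|a i|.
Proof. exact: big_seq_fset1. Qed.

Lemma delta_z_gt0 k : (0 < k)%N -> (0 < delta_z n.+2 k)%N.
Proof.
move=> k_gt0; have e_adm : admissible k [fset pt1a 0].
  split=> [x | ]; first by rewrite inE => /eqP ->; apply: inPcirc_pt1a.
  apply: bigmax_le => // i _; rewrite -/(colsum _ i) colsum_fset1 ffunE.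
  by case: ifP => _; [|case: ifP => _]; rewrite /=; lia.
by rewrite (leq_trans _ (card_le_delta_z e_adm)) ?cardfs1.
Qed.

Lemma unique_max_kappa_BP k (X : {fset pt n.+2}) : (0 < k)%N ->
  admissible k X -> #|` X| = delta_z n.+2 k ->
  (forall Y, admissible k Y -> #|` Y| = #|` X| -> Y = X) ->
  exists p, (0 < p)%N /\ k%:Z = kappa (BP n.+2 p).
Proof.
move=> k_gt0 X_adm X_max X_unique.
have X_BP := unique_max_eq_BP X_adm X_unique; set q := \max_(x <- X) _ in X_BP.
have /fset0Pn[z zX] : X != fset0 by rewrite -cardfs_gt0 X_max delta_z_gt0.
have q_gt0 : (0 < q)%N.
  move: zX; rewrite X_BP in_BP => /andP[/andP[z_prim _] zq].
  by have := l1_gt0 z_prim; lia.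
exists q; split => //; rewrite -X_BP; apply/le_anti; rewrite (proj2 X_adm) andbT.
rewrite leNgt; apply/negP => kappa_lt_k.
suff /eqP : [fset pt1a q%:Z] = fset0 by rewrite -cardfs_eq0 cardfs1.
apply: (swap_trivial X_adm X_unique (U := [fset pt1a (q%:Z - 1)])).
- by rewrite fsub1set X_BP in_BP inPcirc_pt1a l1_pt1a; lia.
- by move=> y; rewrite inE => /eqP ->; apply: inPcirc_pt1a.
- by rewrite fdisjointX1 X_BP in_BP l1_pt1a; lia.
- by rewrite !cardfs1.
move=> i; rewrite !colsum_fset1 !ffunE; have := colsum_le_kappa X i.
by case: ifP => _; [|case: ifP => _]; lia.
Qed.

End TwoDimensions.

Unset Implicit Arguments.
Theorem theorem1p4 (d k : nat) (hd : (2 <= d)%N) (hk : (0 < k)%N) :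
  (exists! X : {fset pt d}, admissible k X /\ #|` X| = delta_z d k) <->
  (exists p : nat, (0 < p)%N /\ k%:Z = kappa (BP d p)).
Proof.
case: d hd => [|[|n]] // _; split.
  case=> X [[X_adm X_max] X_unique]; apply: (unique_max_kappa_BP hk X_adm X_max).
  by move=> Y Y_adm Y_card; apply/esym/X_unique; rewrite Y_card.
case=> p [_ kp]; have [X [X_adm X_max]] := delta_z_attained n.+2 k.
exists X; split => // Y [Y_adm Y_max].
by rewrite (max_admissible_eq_BP _ kp X_adm X_max) // (max_admissible_eq_BP _ kp Y_adm Y_max).
Qed.
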